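(* Let $T=M\times_\Phi^q S$ be a tight twisted product semigroup where the commutative monoid $M$ is $\mathcal{D}$-trivial. Then $$E(T)=\{(i,e)\in E(M)\times E(S)\mid i=i+\Phi(e,e)q\}.$$
   Context: $\mathbb{N}=\{0,1,2,\dots\}$. A twisting of a semigroup $S$ is a map $\Phi:S\times S\to\mathbb{N}$ with $\Phi(a,b)+\Phi(ab,c)=\Phi(a,bc)+\Phi(b,c)$ for all $a,b,c\in S$. It is tight if (1) for all $a,b\in S$ there is $a'\in S$ with $ab=a'b$ and $\Phi(a',b)=0$, and (2) for all $a,b\in S$ there is $b'\in S$ with $ab=ab'$ and $\Phi(a,b')=0$. Given a commutative monoid $M$ written additively and $q\in M$, the twisted product semigroup $T=M\times_\Phi^q S$ is the set $M\times S$ with product $(j,a)(k,b)=(j+k+\Phi(a,b)q,\,ab)$, where $\Phi(a,b)q$ is the sum of $\Phi(a,b)$ copies of $q$; $T$ is called tight if $\Phi$ is tight. $E(X)$ denotes the set of idempotents of $X$ (in additive notation, $E(M)=\{i\in M\mid i+i=i\}$). $M$ is $\mathcal{D}$-trivial if all its Green $\mathcal{D}$-classes are singletons. *)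

From HB Require Import structures.
From mathcomp Require Import all_boot all_order all_algebra.
Set Implicit Arguments. Unset Strict Implicit. Unset Printing Implicit Defensive.
Import GRing.Theory.
Local Open Scope ring_scope.

Definition associative_op (S : Type) (mul : S -> S -> S) : Prop :=
  forall a b c, mul a (mul b c) = mul (mul a b) c.

Definition twisting (S : Type) (mul : S -> S -> S) (Phi : S -> S -> nat) : Prop :=
  forall a b c, (Phi a b + Phi (mul a b) c = Phi a (mul b c) + Phi b c)%N.

Definition tight (S : Type) (mul : S -> S -> S) (Phi : S -> S -> nat) : Prop :=
  (forall a b, exists a', mul a b = mul a' b /\ Phi a' b = 0%N) /\
  (forall a b, exists b', mul a b = mul a b' /\ Phi a b' = 0%N).

Definition twisted_mul (M : nmodType) (S : Type) (mul : S -> S -> S)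
  (Phi : S -> S -> nat) (q : M) (x y : M * S) : M * S :=
  (x.1 + y.1 + q *+ Phi x.2 y.2, mul x.2 y.2).

Definition twisted_idempotent (M : nmodType) (S : Type) (mul : S -> S -> S)
  (Phi : S -> S -> nat) (q : M) (x : M * S) : Prop :=
  twisted_mul mul Phi q x x = x.

Definition greenL (M : nmodType) (a b : M) : Prop :=
  (exists x, a = x + b) /\ (exists y, b = y + a).
Definition greenR (M : nmodType) (a b : M) : Prop :=
  (exists x, a = b + x) /\ (exists y, b = a + y).
Definition greenD (M : nmodType) (a b : M) : Prop :=
  exists c, greenL a c /\ greenR c b.
Definition D_trivial (M : nmodType) : Prop :=
  forall a b : M, greenD a b -> a = b.

From HB Require Import structures.
From mathcomp Require Import all_boot all_order all_algebra.
Set Implicit Arguments. Unset Strict Implicit. Unset Printing Implicit Defensive.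
Local Open Scope ring_scope.
Import GRing.Theory.

(* (i, e) is idempotent iff e e = e and i + i + Phi(e,e) q = i.  The latter
   makes i and i + i mutually divisible, hence R-related, hence D-related; so
   D-triviality forces i + i = i, and then the condition reads i = i + Phi(e,e) q. *)

Lemma greenL_refl (M : nmodType) (a : M) : greenL a a.
Proof. by split; exists 0; rewrite add0r. Qed.

Lemma greenR_greenD (M : nmodType) (a b : M) : greenR a b -> greenD a b.
Proof. by exists a; split; [exact: greenL_refl|]. Qed.

Lemma D_trivial_greenR_eq (M : nmodType) (a b : M) :
  D_trivial M -> greenR a b -> a = b.
Proof. by move=> HD /greenR_greenD /HD. Qed.

Lemma D_trivial_addr_idem (M : nmodType) (i c : M) :
  D_trivial M -> i + i + c = i -> i + i = i.
Proof.
move=> HD Hic; symmetry; apply: D_trivial_greenR_eq => //.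
by split; [exists c | exists i].
Qed.

Lemma twisted_idempotentE (M : nmodType) (S : Type) (mul : S -> S -> S)
  (Phi : S -> S -> nat) (q : M) (i : M) (e : S) :
  twisted_idempotent mul Phi q (i, e) <->
  i + i + q *+ Phi e e = i /\ mul e e = e.
Proof.
by rewrite /twisted_idempotent /twisted_mul /=; split=> [[-> ->] | [-> ->]].
Qed.

Theorem mainTheorem4 (M : nmodType) (S : Type) (mul : S -> S -> S)
  (Phi : S -> S -> nat) (q : M) :
  associative_op mul ->
  twisting mul Phi ->
  tight mul Phi ->
  D_trivial M ->
  forall (i : M) (e : S),
    twisted_idempotent mul Phi q (i, e) <->
    [/\ i + i = i, mul e e = e & i = i + q *+ Phi e e].
Proof.
move=> _ _ _ HD i e; apply: iff_trans (twisted_idempotentE _ _ _ _ _) _.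
split=> [[Hi He] | [Hii He Hq]].
- have Hii := D_trivial_addr_idem HD Hi.
  by split=> //; rewrite -{1}Hi Hii.
- by split=> //; rewrite Hii -Hq.
Qed.
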